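(* Consider the approximate power-flow model $\mathbf{q}=\operatorname{diag}(\mathbf{v})\mathbf{B}\mathbf{v}$, partitioned into generator (G) and load (L) buses as $$\begin{bmatrix}\mathbf{q}_G\\ \mathbf{q}_L\end{bmatrix}=\begin{bmatrix}\operatorname{diag}(\mathbf{v}_G)&\mathbf{0}\\ \mathbf{0}&\operatorname{diag}(\mathbf{v}_L)\end{bmatrix}\begin{bmatrix}\mathbf{B}_{GG}&\mathbf{B}_{LG}^\top\\ \mathbf{B}_{LG}&\mathbf{B}_{LL}\end{bmatrix}\begin{bmatrix}\mathbf{v}_G\\ \mathbf{v}_L\end{bmatrix}.$$ For control input $\mathbf{u}=[\mathbf{q}_L^\top~~\mathbf{v}_G^\top]^\top$ and output $\mathbf{y}=\mathbf{v}_L$, the mapping $\mathbf{y}=\mathrm{F}(\mathbf{u})$ implicitly defined by this model satisfies $\nabla_{\mathbf{u}}\mathrm{F}(\mathbf{u})\geq\mathbf{0}$ (entrywise) if $\operatorname{diag}(\mathbf{g}_L)+\mathbf{B}_{LL}\succ 0$, where $\mathbf{g}_L:=[\operatorname{diag}(\mathbf{v}_L)]^{-2}\mathbf{q}_L$.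
   Context: An electric power network is modeled by a graph $\mathcal{G}=(\mathcal{N},\mathcal{E})$ with edges being transmission lines; buses are partitioned into generator (PV) buses $\mathcal{N}_G$ and load (PQ) buses $\mathcal{N}_L$. $v_n$ and $q_n$ denote voltage magnitude and reactive power injection at bus $n$; vectors $\mathbf{v},\mathbf{q}$ stack them, with subscripts $G$, $L$ denoting the generator and load sub-vectors. $\mathbf{B}\in\mathbb{R}^{N\times N}$ is a weighted Laplacian of $\mathcal{G}$: $B_{mn}<0$ equals the negative susceptance of line $(m,n)\in\mathcal{E}$, $B_{mn}=0$ if $(m,n)\notin\mathcal{E}$, and $B_{mm}=-\sum_{n\neq m}B_{mn}>0$; it is partitioned into blocks $\mathbf{B}_{GG},\mathbf{B}_{LG},\mathbf{B}_{LL}$ accordingly. Voltages are positive, $\mathbf{v}_L>\mathbf{0}$. The symbol $\succ 0$ for a matrix means all its eigenvalues are real and positive. Inequalities between vectors/matrices are entrywise. *)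

From HB Require Import structures.
From mathcomp Require Import all_boot all_order all_algebra.
From mathcomp Require Import all_classical all_reals all_analysis.
From mathcomp Require Import complex.
Set Implicit Arguments. Unset Strict Implicit. Unset Printing Implicit Defensive.
Import Order.TTheory GRing.Theory Num.Theory.
Import numFieldNormedType.Exports.
Local Open Scope ring_scope.

Definition weighted_laplacian (R : numDomainType) (N : nat) (B : 'M[R]_N) : Prop :=
  B^T = B /\
  (forall m n : 'I_N, m != n -> B m n <= 0) /\
  (forall m : 'I_N, B m m = - \sum_(n < N | n != m) B m n).

Definition power_flow (R : numDomainType) (N : nat) (B : 'M[R]_N)
  (v q : 'cV[R]_N) : Prop :=
  q = diag_mx v^T *m B *m v.

(* A real square matrix is "≻ 0": all its (complex) eigenvalues are real and
   positive. In the numeric closed field R[i], 0 < z means z is real and positive. *)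
Definition pos_eig (R : rcfType) (n : nat) (M : 'M[R]_n) : Prop :=
  forall z : R[i], eigenvalue (map_mx (fun x : R => (x%:C)%C) M) z -> 0 < z.

From HB Require Import structures.
From mathcomp Require Import all_boot all_order all_algebra.
From mathcomp Require Import all_classical all_reals all_analysis.
From mathcomp Require Import complex.
From mathcomp Require Import ring.

(* Differentiating the load rows q_L = diag(v_L) (B_LG v_G + B_LL v_L) of the
   power-flow equations along an input direction e = (e_q; e_v) >= 0 and
   dividing by v_L > 0 shows that w := dF(u) e solves

     (diag(g_L) + B_LL) w = diag(v_L)^-1 (e_q - diag(v_L) B_LG e_v) >= 0,

   because B_LG <= 0.  The matrix M := diag(g_L) + B_LL is symmetric with
   nonpositive off-diagonal entries, and positivity of its spectrum makes it
   positive definite (spectral theorem over R[i]).  Splitting w = w+ - w-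
   into parts with disjoint supports gives
   w-' M w- = w-' M w+ - w-' M w <= 0, hence w- = 0. *)

Set Implicit Arguments.
Unset Strict Implicit.
Unset Printing Implicit Defensive.
Import Order.TTheory GRing.Theory Num.Theory.
Import numFieldNormedType.Exports.
Local Open Scope ring_scope.

Section NormalQuadraticForm.
Local Open Scope sesquilinear_scope.
Variable C : numClosedFieldType.

Lemma trmxC_mul m n p (A : 'M[C]_(m, n)) (B : 'M[C]_(n, p)) :
  (A *m B)^t* = B^t* *m A^t*.
Proof. by rewrite trmx_mul map_mxM. Qed.

Lemma eigenvalue_spectral_diag n (A : 'M[C]_n) k :
  A \is normalmx -> eigenvalue A (spectral_diag A 0 k).
Proof.
move=> /orthomx_spectralP A_eq; set P := spectralmx A in A_eq.
have P_unit : P \in unitmx := spectral_unit A.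
apply/eigenvalueP; exists (delta_mx 0 k *m P).
  rewrite [in LHS]A_eq !mulmxA mulmxK //.
  by rewrite -!rowE row_diag_mx -scalemxAl -rowE.
apply/negP => /eqP/(congr1 (mulmx^~ (invmx P))); rewrite mulmxK // mul0mx.
by move=> /matrixP/(_ 0 k)/eqP; rewrite !mxE !eqxx oner_eq0.
Qed.

Lemma diag_form_gt0 n (d y : 'rV[C]_n) :
  (forall k, 0 < d 0 k) -> y != 0 -> 0 < (y *m diag_mx d *m y^t*) 0 0.
Proof.
move=> d_gt0 y_neq0.
have -> : (y *m diag_mx d *m y^t*) 0 0 = \sum_k d 0 k * (y 0 k * (y 0 k)^*).
  by rewrite mul_mx_diag mxE; apply: eq_bigr => k _; rewrite !mxE mulrCA mulrA.
have term_ge0 k : 0 <= d 0 k * (y 0 k * (y 0 k)^*).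
  exact: mulr_ge0 (ltW (d_gt0 k)) (mul_conjC_ge0 _).
rewrite lt0r sumr_ge0 // andbT psumr_neq0 //; apply/hasP.
have [k yk_neq0] : exists k, y 0 k != 0.
  apply/existsP; apply: contraNT y_neq0 => /existsPn y0.
  by apply/eqP/matrixP => i k; rewrite ord1 mxE; apply/eqP/negbNE.
by exists k; rewrite ?mem_index_enum // mulr_gt0 ?mul_conjC_gt0.
Qed.

Lemma normalmx_form_gt0 n (A : 'M[C]_n) :
  A \is normalmx -> (forall z, eigenvalue A z -> 0 < z) ->
  forall x : 'rV_n, x != 0 -> 0 < (x *m A *m x^t*) 0 0.
Proof.
move=> A_normal A_pos x x_neq0.
have P_unitary := spectral_unitarymx A.
move/orthomx_spectralP: (A_normal) => A_eq.
rewrite A_eq invmx_unitary //.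
set P := spectralmx A in P_unitary *; set d := spectral_diag A.
have -> : x *m (P^t* *m diag_mx d *m P) *m x^t*
          = (x *m P^t*) *m diag_mx d *m (x *m P^t*)^t*.
  by rewrite trmxC_mul trmxCK !mulmxA.
apply: diag_form_gt0 => [k|]; first by apply/A_pos/eigenvalue_spectral_diag.
apply: contra x_neq0 => /eqP y0.
by rewrite -(mulmxKtV x P_unitary) // y0 mul0mx.
Qed.

End NormalQuadraticForm.

Section RealSymmetric.
Local Open Scope sesquilinear_scope.
Variable R : rcfType.

Lemma trmxC_map_real_complex m n (A : 'M[R]_(m, n)) :
  (map_mx (real_complex R) A)^t* = map_mx (real_complex R) A^T.
Proof.
apply/matrixP => i j; rewrite !mxE conj_Creal //.
by apply/complex_realP; exists (A j i).
Qed.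

Lemma sym_pos_eig_form_gt0 n (M : 'M[R]_n) : M^T = M -> pos_eig M ->
  forall x : 'rV_n, x != 0 -> 0 < (x *m M *m x^T) 0 0.
Proof.
move=> M_sym M_pos x x_neq0.
set Mc := map_mx (real_complex R) M.
have Mc_normal : Mc \is normalmx.
  by apply/normalmxP; rewrite trmxC_map_real_complex M_sym.
set Q := x *m M *m x^T.
rewrite -ltcR rmorph0 (_ : _%:C%C = map_mx (real_complex R) Q 0 0);
  last by rewrite [RHS]mxE.
rewrite /Q !map_mxM -trmxC_map_real_complex.
apply: normalmx_form_gt0 => //.
by rewrite map_mx_eq0.
Qed.

End RealSymmetric.

Lemma Zmatrix_posdef_ge0 (R : realDomainType) n (M : 'M[R]_n) (w : 'cV_n) :
  (forall a b, a != b -> M a b <= 0) ->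
  (forall x : 'rV_n, x != 0 -> 0 < (x *m M *m x^T) 0 0) ->
  (forall a, 0 <= (M *m w) a 0) -> forall a, 0 <= w a 0.
Proof.
move=> M_offdiag M_posdef Mw_ge0.
pose wp := \row_b (if w b 0 < 0 then 0 else w b 0).
pose wn := \row_b (if w b 0 < 0 then - w b 0 else 0).
have w_split : w = wp^T - wn^T.
  apply/matrixP => b i; rewrite ord1 !mxE.
  by case: ifP; rewrite ?sub0r ?opprK ?subr0.
have wp_ge0 b : 0 <= wp 0 b.
  by rewrite mxE; case: ltP.
have wn_ge0 b : 0 <= wn 0 b.
  by rewrite mxE; case: ltP => // /ltW; rewrite oppr_ge0.
have wnp0 b : wn 0 b * wp 0 b = 0.
  by rewrite !mxE; case: ifP; rewrite ?mulr0 ?mul0r.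
clearbody wp wn.
suff wn0 : wn = 0 by move=> a; rewrite w_split wn0 trmx0 subr0 mxE.
apply: (contraNeq (M_posdef wn)); rewrite -leNgt.
have -> : wn *m M *m wn^T = wn *m M *m wp^T - wn *m (M *m w).
  by rewrite w_split !mulmxBr !mulmxA opprB addrC subrK.
rewrite [leLHS]mxE [X in _ + X]mxE subr_le0 [X in _ <= X]mxE.
apply: le_trans (sumr_ge0 _ _) => [|c _]; last exact: mulr_ge0.
rewrite mxE sumr_le0 // => b _; rewrite !mxE mulr_suml sumr_le0 // => c _.
have [<-|cb] := eqVneq c b; first by rewrite mulrAC wnp0 mul0r.
by rewrite mulrAC mulr_ge0_le0 ?mulr_ge0 ?M_offdiag.
Qed.

Section EntrywiseDerive.
Context {R : realFieldType} {V : normedModType R}.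
Variables x v : V.

Lemma is_derive_near_eq (W : normedModType R) (f g : V -> W) (df dg : W) :
  (\near x, f x = g x) -> is_derive x v f df -> is_derive x v g dg -> df = dg.
Proof.
move=> fg f_df g_dg; have g_df := near_eq_is_derive fg f_df.
by rewrite -(@derive_val _ _ _ _ _ _ _ g_df) (@derive_val _ _ _ _ _ _ _ g_dg).
Qed.

Lemma is_derive_mx_entry m n (M : V -> 'M[R]_(m, n)) i j :
  derivable M x v -> is_derive x v (fun u => M u i j) ('D_v M x i j).
Proof.
move=> M_der; apply: DeriveDef; first by move/derivable_mxP: M_der.
by rewrite derive_mx // mxE.
Qed.

Lemma is_derive_mulmx_entry m n p (A : 'M[R]_(m, n))
    (M : V -> 'M[R]_(n, p)) (dM : 'M[R]_(n, p)) :
  (forall k l, is_derive x v (fun u => M u k l) (dM k l)) ->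
  forall i l, is_derive x v (fun u => (A *m M u) i l) ((A *m dM) i l).
Proof.
move=> M_der i l; rewrite mxE.
have -> : (fun u => (A *m M u) i l) = \sum_k (A i k \*: fun u => M u k l).
  by apply/funext => u; rewrite mxE fct_sumE.
by apply: is_derive_sum => k; apply: is_deriveZ.
Qed.

End EntrywiseDerive.

Lemma is_derive_entry (R : realFieldType) m n (x v : 'M[R]_(m, n)) i j :
  is_derive x v (fun u => u i j) (v i j).
Proof.
have := @is_derive_mx_entry _ _ x v _ _ id i j (@derivable_id _ _ x v).
by rewrite derive_id.
Qed.

Lemma power_flow_load_entry (R : numDomainType) nG nL (B : 'M[R]_(nG + nL))
    (vG qG : 'cV[R]_nG) (vL qL : 'cV[R]_nL) a :
  power_flow B (col_mx vG vL) (col_mx qG qL) ->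
  qL a 0 = vL a 0 * ((dlsubmx B *m vG) a 0 + (drsubmx B *m vL) a 0).
Proof.
move=> /matrixP/(_ (rshift nG a) 0); rewrite col_mxEd -mulmxA mul_diag_mx mxE.
rewrite [_^T 0 _]mxE col_mxEd => ->; congr (_ * _).
have -> : (B *m col_mx vG vL) (rshift nG a) 0 = dsubmx (B *m col_mx vG vL) a 0.
  by rewrite [RHS]mxE.
by rewrite -mul_dsub_mx -[dsubmx B]hsubmxK mul_row_col mxE.
Qed.

Section LoadFlowLinearization.
Variables (R : realType) (nG nL : nat) (B : 'M[R]_(nG + nL)).
Variables (F : 'cV[R]_(nL + nG) -> 'cV[R]_nL) (u0 e : 'cV[R]_(nL + nG)).
Hypothesis flow_near : \forall u \near u0, exists qG : 'cV[R]_nG,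
  power_flow B (col_mx (dsubmx u) (F u)) (col_mx qG (usubmx u)).
Hypothesis F_diff : differentiable F u0.

Lemma load_flow_linearization a :
  usubmx e a 0 =
    F u0 a 0 * ((dlsubmx B *m dsubmx e) a 0 + (drsubmx B *m 'd F u0 e) a 0)
    + ((dlsubmx B *m dsubmx u0) a 0 + (drsubmx B *m F u0) a 0) * 'd F u0 e a 0.
Proof.
have flow_a : \forall u \near u0, usubmx u a 0 =
    F u a 0 * ((dlsubmx B *m dsubmx u) a 0 + (drsubmx B *m F u) a 0).
  by apply: filterS flow_near => u [qG /power_flow_load_entry ->].
have dF k l : is_derive u0 e (fun u => F u k l) ('d F u0 e k l).
  by rewrite -deriveE //; apply/is_derive_mx_entry/diff_derivable.
have d_dsub k l : is_derive u0 e (fun u => dsubmx u k l) (dsubmx e k l).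
  rewrite [dsubmx e k l]mxE.
  have -> : (fun u : 'cV[R]_(nL + nG) => dsubmx u k l)
            = fun u => u (rshift nL k) l.
    by apply/funext => u; rewrite mxE.
  exact: is_derive_entry.
have d_usub : is_derive u0 e (fun u => usubmx u a 0) (usubmx e a 0).
  rewrite [usubmx e a 0]mxE.
  have -> : (fun u : 'cV[R]_(nL + nG) => usubmx u a 0)
            = fun u => u (lshift nG a) 0.
    by apply/funext => u; rewrite mxE.
  exact: is_derive_entry.
apply: is_derive_near_eq flow_a d_usub _.
by apply: is_deriveM; apply: is_deriveD; exact: is_derive_mulmx_entry.
Qed.

Let gL := \col_i (usubmx u0 i 0 / F u0 i 0 ^+ 2).

Lemma linearized_load_flow_ge0 a :
  0 < F u0 a 0 -> (forall k, 0 <= e k 0) -> (forall k, dlsubmx B a k <= 0) ->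
  0 <= ((diag_mx gL^T + drsubmx B) *m 'd F u0 e) a 0.
Proof.
move=> v_gt0 e_ge0 BLG_le0.
have [qG flow0] := nbhs_singleton flow_near.
have lin := load_flow_linearization a.
move: (power_flow_load_entry a flow0) lin.
set v := F u0 a 0; set b := (dlsubmx B *m dsubmx e) a 0.
set t := (drsubmx B *m _) a 0; set w := 'd F u0 e a 0 => q_eq lin.
have b_le0 : b <= 0.
  rewrite /b mxE sumr_le0 // => k _; rewrite [dsubmx e k 0]mxE.
  exact: mulr_le0_ge0.
have -> : ((diag_mx gL^T + drsubmx B) *m 'd F u0 e) a 0
          = usubmx u0 a 0 / v ^+ 2 * w + t.
  by rewrite mulmxDl mul_diag_mx [LHS]mxE [X in X + _]mxE [gL^T 0 a]mxE mxE.
have -> : usubmx u0 a 0 / v ^+ 2 * w + t = (usubmx e a 0 - v * b) / v.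
  by rewrite lin q_eq; field; rewrite lt0r_neq0.
apply: divr_ge0; last exact: ltW.
have vb_le0 : v * b <= 0 by rewrite pmulr_rle0.
by rewrite subr_ge0 (le_trans vb_le0) // mxE.
Qed.

End LoadFlowLinearization.

(* Buses ordered as [G; L]: v = col_mx vG vL, q = col_mx qG qL.
   Input u = col_mx qL vG, output y = vL = F u. *)
Theorem proposition1 (R : realType) (nG nL : nat) (B : 'M[R]_(nG + nL))
  (F : 'cV[R]_(nL + nG) -> 'cV[R]_nL) (u0 : 'cV[R]_(nL + nG)) :
  weighted_laplacian B ->
  (\forall u \near u0, exists qG : 'cV[R]_nG,
      power_flow B (col_mx (dsubmx u) (F u)) (col_mx qG (usubmx u))) ->
  (forall i : 'I_nL, 0 < F u0 i 0) ->
  differentiable F u0 ->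
  let vL := F u0 in
  let qL := usubmx u0 in
  let gL : 'cV[R]_nL := \col_i (qL i 0 / (vL i 0) ^+ 2) in
  pos_eig (diag_mx gL^T + drsubmx B) ->
  forall (i : 'I_nL) (j : 'I_(nL + nG)), 0 <= ('d F u0 (delta_mx j 0)) i 0.
Proof.
move=> [B_sym [B_offdiag _]] flow_near vL_pos F_diff vL qL gL M_pos i j.
apply: (@Zmatrix_posdef_ge0 _ _ (diag_mx gL^T + drsubmx B)).
- move=> a b ab; rewrite !mxE (negbTE ab) mulr0n add0r.
  by apply: B_offdiag; rewrite eq_rshift.
- apply: sym_pos_eig_form_gt0 M_pos.
  by rewrite linearD /= tr_diag_mx trmx_drsub B_sym.
- move=> a.
  apply: (linearized_load_flow_ge0 (e := delta_mx j 0) flow_near F_diff)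
    => // k.
    by rewrite mxE ler0n.
  by rewrite !mxE; apply: B_offdiag; rewrite eq_rlshift.
Qed.
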